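(* Let $f:\mathbb{R}^d\to\mathbb{R}$ be convex and differentiable, let $h:\mathbb{R}^d\to\mathbb{R}\cup\{+\infty\}$ be proper, closed and convex, let $x\in\mathbb{R}^d$, $\lambda>0$, write $G=G^{f}_{\lambda h}(x)$ and $x^+=x-\lambda G$. If $$f(x-2\lambda G)\le f(x-\lambda G)-\lambda\langle G,\nabla f(x)\rangle+\tfrac{\lambda}{2}\|G\|^2,$$ then $$\Big\langle x^+-x,\;\nabla f(x^+)-\nabla f(x)+\tfrac12 G\Big\rangle\le 0 .$$
   Context: $\mathbb{R}^d$ carries the standard inner product $\langle\cdot,\cdot\rangle$ and Euclidean norm $\|\cdot\|$. For $\lambda>0$ the proximal operator is $\mathrm{prox}_{\lambda h}(w)=\arg\min_{u\in\mathbb{R}^d}\big\{\lambda h(u)+\tfrac12\|u-w\|^2\big\}$. The gradient mapping is $G^{f}_{\lambda h}(x)=\frac{1}{\lambda}\Big(x-\mathrm{prox}_{\lambda h}\big(x-\lambda\nabla f(x)\big)\Big)$. *)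

From HB Require Import structures.
From mathcomp Require Import all_boot all_order all_algebra.
From mathcomp Require Import all_classical all_reals all_analysis.
Set Implicit Arguments. Unset Strict Implicit. Unset Printing Implicit Defensive.
Import Order.TTheory GRing.Theory Num.Theory.
Import numFieldNormedType.Exports.
Local Open Scope classical_set_scope.
Local Open Scope ring_scope.

Section Defs.
Variables (R : realType) (d : nat).
Notation V := 'rV[R]_d.

Definition dotp (u v : V) : R := \sum_(i < d) u ord0 i * v ord0 i.
Definition enorm (u : V) : R := Num.sqrt (dotp u u).

Definition ebasis (i : 'I_d) : V := \row_(j < d) (i == j)%:R.

Definition grad (f : V -> R) (x : V) : V := \row_(i < d) ('d f x (ebasis i)).

Definition convex_rfun (f : V -> R) : Prop :=
  forall (a b : V) (t : R), 0 <= t <= 1 ->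
    f (t *: a + (1 - t) *: b) <= t * f a + (1 - t) * f b.

Definition convex_efun (h : V -> \bar R) : Prop :=
  forall (a b : V) (t : R), 0 < t < 1 ->
    (h (t *: a + (1 - t) *: b)%R <= t%:E * h a + (1 - t)%:E * h b)%E.

Definition proper_efun (h : V -> \bar R) : Prop :=
  (exists u, (h u < +oo)%E) /\ (forall u, (-oo < h u)%E).

Definition closed_efun (h : V -> \bar R) : Prop :=
  closed [set p : V * R | (h p.1 <= p.2%:E)%E].

Definition is_prox (lam : R) (h : V -> \bar R) (w p : V) : Prop :=
  forall u : V,
    (lam%:E * h p + (2^-1 * enorm (p - w)%R ^+ 2)%:E
      <= lam%:E * h u + (2^-1 * enorm (u - w)%R ^+ 2)%:E)%E.

(* gradient mapping G^f_{lam h}(x) = (x - prox_{lam h}(x - lam grad f x)) / lam,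
   given p = prox_{lam h}(x - lam grad f x) *)
Definition grad_map (lam : R) (x p : V) : V := lam^-1 *: (x - p).
End Defs.

From HB Require Import structures.
From mathcomp Require Import all_boot all_order all_algebra.
From mathcomp Require Import all_classical all_reals all_analysis.
From mathcomp Require Import lra.
Import Order.TTheory GRing.Theory Num.Theory.
Import numFieldNormedType.Exports.
Local Open Scope classical_set_scope.
Local Open Scope ring_scope.

(* Convexity of f at x+ gives f(x - 2 lam G) - f(x+) >= <grad f(x+), -lam G>; chained
   with the hypothesis this bounds <-lam G, grad f(x+)> by
   <-lam G, grad f(x)> - (lam/2) ||G||^2, which is the claim once x+ - x = -lam G
   is substituted.  Nothing about the prox step is needed. *)

Section InnerProduct.
Variables (R : realType) (d : nat).
Notation V := 'rV[R]_d.

Lemma dotpDr (u a b : V) : dotp u (a + b) = dotp u a + dotp u b.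
Proof. by rewrite /dotp -big_split; apply: eq_bigr => i _; rewrite mxE mulrDr. Qed.

Lemma dotpNr (u a : V) : dotp u (- a) = - dotp u a.
Proof. by rewrite /dotp -sumrN; apply: eq_bigr => i _; rewrite mxE mulrN. Qed.

Lemma dotpZl (k : R) (u a : V) : dotp (k *: u) a = k * dotp u a.
Proof. by rewrite /dotp mulr_sumr; apply: eq_bigr => i _; rewrite mxE mulrA. Qed.

Lemma dotpZr (k : R) (u a : V) : dotp u (k *: a) = k * dotp u a.
Proof.
by rewrite /dotp mulr_sumr; apply: eq_bigr => i _; rewrite mxE mulrCA.
Qed.

Lemma enorm_sqr (u : V) : enorm u ^+ 2 = dotp u u.
Proof.
by rewrite /enorm sqr_sqrtr // sumr_ge0 // => i _; rewrite -expr2 sqr_ge0.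
Qed.

Lemma row_sum_ebasis (v : V) : v = \sum_(i < d) v ord0 i *: @ebasis R d i.
Proof.
apply/rowP => j; rewrite summxE (bigD1 j) //= big1 ?addr0.
  by rewrite !mxE eqxx mulr1.
by move=> i /negbTE ij; rewrite !mxE ij mulr0.
Qed.

Lemma diff_dotp_grad (f : V -> R) (z v : V) : 'd f z v = dotp v (grad f z).
Proof.
rewrite [in LHS](row_sum_ebasis v) linear_sum /dotp; apply: eq_bigr => i _.
by rewrite linearZ /= mxE.
Qed.

End InnerProduct.

Section FirstOrderConvexity.
Variables (R : realType) (d : nat).
Notation V := 'rV[R]_d.

Lemma convex_rfun_secant (f : V -> R) (z v : V) (t : R) :
  convex_rfun f -> 0 < t < 1 -> t^-1 * (f (z + t *: v) - f z) <= f (z + v) - f z.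
Proof.
move=> cf /andP[t0 t1]; rewrite ler_pdivrMl //.
have := cf (z + v) z t; rewrite ltW // ltW //= => /(_ isT).
have -> : t *: (z + v) + (1 - t) *: z = z + t *: v.
  by rewrite scalerDr scalerBl scale1r addrC addrA subrK.
by lra.
Qed.

(* The differential is the limit of the difference quotients from the right,
   each of which is bounded by the secant slope over [z, z + v]. *)
Lemma convex_rfun_diff_le (f : V -> R) (z v : V) :
  convex_rfun f -> differentiable f z -> 'd f z v <= f (z + v) - f z.
Proof.
move=> cf df; rewrite -deriveE //.
have quot_cvg : (fun t : R => t^-1 *: ((f \o shift z) (t *: v) - f z)) @ 0^'
    --> 'D_v f z by exact: diff_derivable.
have quot_cvg_right : (fun t : R => t^-1 *: ((f \o shift z) (t *: v) - f z)) @ 0^'+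
    --> 'D_v f z.
  move=> A /quot_cvg /nbhs_ballP [_ /posnumP[e] eA].
  by exists e%:num => //= y ey; rewrite lt_def => /andP[y0 _]; apply: eA.
apply: (cvgr_to_le quot_cvg_right); exists 1 => //= t.
rewrite /ball /= sub0r normrN => t1 t0.
rewrite /= /shift /= [t *: v + z]addrC; apply: convex_rfun_secant => //.
by rewrite t0 (le_lt_trans (ler_norm t)).
Qed.

End FirstOrderConvexity.

Lemma chain_descent_bounds (R : realType) (lam a b c u w : R) :
  - lam * a <= u - w -> u <= w - lam * b + lam / 2 * c ->
  - lam * (a - b + 2^-1 * c) <= 0.
Proof. by move=> ? ?; lra. Qed.

Theorem lemma2p1 (R : realType) (d : nat) (f : 'rV[R]_d -> R)
  (h : 'rV[R]_d -> \bar R) (x : 'rV[R]_d) (lam : R) :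
  convex_rfun f -> (forall y, differentiable f y) ->
  proper_efun h -> closed_efun h -> convex_efun h -> 0 < lam ->
  forall p : 'rV[R]_d, is_prox lam h (x - lam *: grad f x) p ->
  let G := grad_map lam x p in
  let xp := x - lam *: G in
  f (x - (2 * lam) *: G) <=
    f (x - lam *: G) - lam * dotp G (grad f x) + lam / 2 * enorm G ^+ 2 ->
  dotp (xp - x) (grad f xp - grad f x + 2^-1 *: G) <= 0.
Proof.
move=> cf df _ _ _ _ p _ G xp descent.
have step : xp - x = - lam *: G by rewrite /xp addrAC subrr add0r scaleNr.
have double_step : xp + (- lam) *: G = x - (2 * lam) *: G.
  by rewrite /xp -addrA scaleNr -opprD -scalerDl mulr2n mulrDl mul1r.
have := @convex_rfun_diff_le R d f xp (- lam *: G) cf (df xp).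
rewrite diff_dotp_grad double_step dotpZl => first_order.
rewrite enorm_sqr -/xp in descent.
rewrite step dotpZl !dotpDr dotpNr dotpZr.
exact: chain_descent_bounds first_order descent.
Qed.
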